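(* For a vertex-colored graph $(G,\sigma)$ whose coloring uses exactly two colors, the following are equivalent: (1) $(G,\sigma)$ is a $2$-RBMG; (2) $(G,\sigma)$ is a properly $2$-colored bicluster graph containing at least one edge; (3) $(G,\sigma)$ is a $2$-RBMG and an orthology graph; (4) $(G,\sigma)$ is a $2$-hc-cograph.
   Context: All graphs are finite, simple and undirected. A vertex coloring is a surjective map $\sigma:V\to S$; $(G,\sigma)$ is properly colored if adjacent vertices receive distinct colors. A phylogenetic tree $T$ on $L$ is a rooted tree with root $\rho_T$ and leaf set $L$ whose inner vertices other than the root have degree at least three; $u\preceq_T v$ means $v$ lies on the path from the root to $u$, and $\mathrm{lca}_T$ denotes last common ancestor. For a surjective leaf coloring $\sigma:L\to S$, a leaf $y$ is a best match of $x$ if $\sigma(x)\neq\sigma(y)$ and $\mathrm{lca}_T(x,y)\preceq_T\mathrm{lca}_T(x,y')$ for all $y'$ with $\sigma(y')=\sigma(y)$; reciprocal best matches are pairs each a best match of the other; $G(T,\sigma)$ is the graph on $L$ with edges the reciprocal best matches. A properly colored $(G,\sigma)$ is an RBMG if $G(T,\sigma)=(G,\sigma)$ for some leaf-colored tree $(T,\sigma)$; it is an $n$-RBMG if moreover $|\sigma(V)|=n$. A graph $G$ is an orthology graph if there is a phylogenetic tree $T$ on $V(G)$ with inner-vertex labeling $t:V^0(T)\to\{0,1\}$ such that $xy\in E(G)$ iff $t(\mathrm{lca}_T(x,y))=1$. For colored vertex-disjoint graphs, their join/disjoint union carry the combined coloring. A colored graph $(G,\sigma)$ is a hierarchically colored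 cograph (hc-cograph) if (K1) it is a single colored vertex, or (K2) $(G,\sigma)=(H,\sigma_H)\Join(H',\sigma_{H'})$ (join: disjoint union plus all edges between $V(H)$ and $V(H')$) with $\sigma(V(H))\cap\sigma(V(H'))=\emptyset$, or (K3) $(G,\sigma)=(H,\sigma_H)\,\dot\cup\,(H',\sigma_{H'})$ with $\sigma(V(H))\cap\sigma(V(H'))\in\{\sigma(V(H)),\sigma(V(H'))\}$, where in (K2),(K3) both $(H,\sigma_H),(H',\sigma_{H'})$ are hc-cographs; an $n$-hc-cograph is one using exactly $n$ colors. A biclique is either $K_1$ or a complete bipartite graph; a bicluster graph is a graph whose connected components are bicliques. *)

From mathcomp Require Import all_boot.
Set Implicit Arguments. Unset Strict Implicit. Unset Printing Implicit Defensive.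

(* A finite simple graph on a finType V is a symmetric irreflexive e : rel V.
   A vertex coloring is sigma : V -> S (S a finType). *)

Definition ncolors (V S : finType) (sigma : V -> S) : nat :=
  #|[set sigma x | x : V]|.

Definition properly_colored (V S : finType) (e : rel V) (sigma : V -> S) : Prop :=
  forall x y, e x y -> sigma x <> sigma y.

(* A rooted tree on leaf set L: vertex type, root, parent map (par root = root),
   and the embedding of the leaf set L into the vertices. *)
Record ptree (L : finType) := PTree {
  pt_vtx  : finType;
  pt_root : pt_vtx;
  pt_par  : pt_vtx -> pt_vtx;
  pt_leaf : L -> pt_vtx }.
Arguments pt_vtx {L} p.
Arguments pt_root {L} p.
Arguments pt_par {L} p _.
Arguments pt_leaf {L} p _.

Definition anc (T : finType) (par : T -> T) (u v : T) : Prop :=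
  exists k, iter k par u = v.

Definition is_leafv (T : finType) (root : T) (par : T -> T) (v : T) : Prop :=
  forall u, u <> root -> par u <> v.

(* Phylogenetic tree on L: a rooted tree whose leaf set is (the injective
   image of) L and whose inner vertices other than the root have degree >= 3,
   i.e. at least two children. *)
Definition is_phylo (L : finType) (T : ptree L) : Prop :=
  let par := pt_par T in let root := pt_root T in
  [/\ par root = root,
      (forall v, anc par v root),
      injective (pt_leaf T),
      (forall v, is_leafv root par v <-> exists x, pt_leaf T x = v) &
      (forall v, v <> root -> ~ is_leafv root par v ->
         exists u1 u2, [/\ u1 <> u2, u1 <> root, u2 <> root, par u1 = v & par u2 = v])].

Definition is_lca (T : finType) (par : T -> T) (x y z : T) : Prop :=
  [/\ anc par x z, anc par y z &
      forall w, anc par x w -> anc par y w -> anc par z w].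

Definition best_match (L S : finType) (T : ptree L) (sigma : L -> S) (x y : L) : Prop :=
  sigma x <> sigma y /\
  forall y' z z', sigma y' = sigma y ->
    is_lca (pt_par T) (pt_leaf T x) (pt_leaf T y) z ->
    is_lca (pt_par T) (pt_leaf T x) (pt_leaf T y') z' ->
    anc (pt_par T) z z'.

Definition rbm (L S : finType) (T : ptree L) (sigma : L -> S) (x y : L) : Prop :=
  best_match T sigma x y /\ best_match T sigma y x.

Definition RBMG (V S : finType) (e : rel V) (sigma : V -> S) : Prop :=
  properly_colored e sigma /\
  exists T : ptree V, is_phylo T /\ forall x y, e x y <-> rbm T sigma x y.

Definition nRBMG (n : nat) (V S : finType) (e : rel V) (sigma : V -> S) : Prop :=
  RBMG e sigma /\ ncolors sigma = n.

Definition orthology_graph (V : finType) (e : rel V) : Prop :=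
  exists (T : ptree V) (t : pt_vtx T -> bool), is_phylo T /\
    forall x y, x <> y ->
      (e x y <-> forall z, is_lca (pt_par T) (pt_leaf T x) (pt_leaf T y) z -> t z).

Definition is_biclique (V : finType) (e : rel V) (C : {set V}) : Prop :=
  #|C| = 1 \/
  exists A B : {set V},
    [/\ A :&: B = set0, A :|: B = C, A != set0, B != set0 &
        forall x y, x \in C -> y \in C ->
          (e x y <-> (x \in A /\ y \in B) \/ (x \in B /\ y \in A))].

Definition bicluster (V : finType) (e : rel V) : Prop :=
  forall x, is_biclique e [set y | connect e x y].

(* hc e sigma W : the induced colored subgraph (G[W], sigma|W) is an hc-cograph.
   (Any decomposition of a graph as a join / disjoint union is into induced
   subgraphs, so working with vertex subsets of the fixed graph is faithful.) *)
Inductive hc (V S : finType) (e : rel V) (sigma : V -> S) : {set V} -> Prop :=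
| hc_K1 x : hc e sigma [set x]
| hc_join W1 W2 : hc e sigma W1 -> hc e sigma W2 -> W1 :&: W2 = set0 ->
    (sigma @: W1) :&: (sigma @: W2) = set0 ->
    (forall x y, x \in W1 -> y \in W2 -> e x y) ->
    hc e sigma (W1 :|: W2)
| hc_union W1 W2 : hc e sigma W1 -> hc e sigma W2 -> W1 :&: W2 = set0 ->
    ((sigma @: W1) :&: (sigma @: W2) = sigma @: W1 \/
     (sigma @: W1) :&: (sigma @: W2) = sigma @: W2) ->
    (forall x y, x \in W1 -> y \in W2 -> ~~ e x y) ->
    hc e sigma (W1 :|: W2).

Definition n_hc_cograph (n : nat) (V S : finType) (e : rel V) (sigma : V -> S) : Prop :=
  hc e sigma [set: V] /\ ncolors sigma = n.

From mathcomp Require Import all_boot zify.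
From Stdlib Require Import Classical.
Set Implicit Arguments. Unset Strict Implicit. Unset Printing Implicit Defensive.

(* Each of the four conditions of the theorem is shown to be
   equivalent to one property, [closed_bipartite]: G is properly colored, has
   an edge, and every walk x - y - z - w of length three is closed by the
   edge x - w.

   With two colors and closed walks, connected vertices of
     different colors are adjacent, so every component is a biclique; and
     conversely walks in a bicluster graph are closed.
   - RBMGs.  In a 2-RBMG consecutive reciprocal best matches share their lca,
     which closes walks, and a deepest lca of two differently colored leaves
     yields an edge.  Conversely a [closed_bipartite] graph is the RBMG, and
     an orthology graph, of the tree of an explicit hierarchy: components,
     their color classes, and a "core" separating isolated vertices of
     different colors.
   - hc-cographs.  Induction on the hc structure shows that 2-hc-cographs are
     [closed_bipartite]; conversely such a graph is assembled from its
     components (joins of their two color classes) by disjoint unions. *)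

Section RootedTree.
Variables (T : finType) (par : T -> T) (root : T).
Hypothesis par_root : par root = root.
Hypothesis anc_root : forall v, anc par v root.

Lemma ancP u v : reflect (anc par u v) (fconnect par u v).
Proof.
apply: (iffP idP) => [/iter_findex <-|[k <-]]; last exact: fconnect_iter.
by eexists.
Qed.

Lemma anc_refl u : anc par u u. Proof. by exists 0. Qed.

Lemma anc_trans u v w : anc par u v -> anc par v w -> anc par u w.
Proof. by case=> k <- [m <-]; exists (m + k); rewrite iterD. Qed.

Lemma anc_total x v w : anc par x v -> anc par x w -> anc par v w \/ anc par w v.
Proof.
case=> k <- [m <-]; case: (leqP k m) => le.
  by left; exists (m - k); rewrite -iterD subnK.
by right; exists (k - m); rewrite -iterD subnK // ltnW.
Qed.

(* Antisymmetry: a cycle of par through u would make the root, which is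
   reached from u, equal to u, and the root is a fixed point. *)
Lemma anc_antisym u v : anc par u v -> anc par v u -> u = v.
Proof.
case=> [[<- //|k] Ek [m Em]].
have cyc : iter (m + k.+1) par u = u by rewrite iterD Ek.
have cycn j : iter (j * (m + k.+1)) par u = u.
  by elim: j => [//|j IH]; rewrite mulSn iterD IH cyc.
have [n En] := anc_root u.
have ur : u = root.
  have le : n <= n * (m + k.+1) by rewrite leq_pmulr // addnS.
  by rewrite -(cycn n) -(subnK le) iterD En iter_fix.
by rewrite -Ek ur iter_fix.
Qed.

(* The last common ancestor: the first ancestor of x that is above y. *)
Lemma lca_exists x y : exists z, is_lca par x y z.
Proof.
have ex : exists k, fconnect par y (iter k par x).
  by have [n En] := anc_root x; exists n; rewrite En; apply/ancP.
have [k /ancP yk kmin] := ex_minnP ex.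
exists (iter k par x); split=> //; first by exists k.
move=> w [j <-] /ancP /kmin le.
by exists (j - k); rewrite -iterD subnK.
Qed.

Lemma lca_unique x y z z' : is_lca par x y z -> is_lca par x y z' -> z = z'.
Proof. by case=> xz yz m [xz' yz' m']; apply: anc_antisym; [apply: m | apply: m']. Qed.

Lemma lca_sym x y z : is_lca par x y z -> is_lca par y x z.
Proof. by case=> xz yz m; split=> // w yw xw; apply: m. Qed.

Definition depth z := #|[set w | fconnect par z w]|.

Lemma depth_lt z z' : anc par z' z -> z' <> z -> depth z < depth z'.
Proof.
move=> a ne; apply: proper_card; apply/properP; split.
  by apply/subsetP => w; rewrite !inE => /ancP h; apply/ancP; apply: anc_trans a h.
exists z'; rewrite inE; first by apply/ancP; apply: anc_refl.
by apply/ancP => h; apply: ne; apply: anc_antisym.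
Qed.

Lemma anc_minimal (P : T -> Prop) z : P z ->
  exists z0, P z0 /\ forall z', P z' -> anc par z' z0 -> z' = z0.
Proof.
move=> Pz; have [n] := ubnP (#|T| - depth z); elim: n z Pz => // n IH z Pz lt.
have [[z' [Pz' a ne]]|none] := classic (exists z', [/\ P z', anc par z' z & z' <> z]).
  apply: (IH z' Pz'); have := depth_lt a ne; have := max_card [set w | fconnect par z' w].
  rewrite /depth in lt *; lia.
exists z; split=> // z' Pz' a; apply: NNPP => ne; apply: none; by exists z'.
Qed.

End RootedTree.

Section BestMatch.
Variables (L S : finType) (T : ptree L) (sigma : L -> S).
Local Notation par := (pt_par T).
Local Notation leaf := (pt_leaf T).
Hypothesis par_root : par (pt_root T) = pt_root T.
Hypothesis anc_root : forall v, anc par v (pt_root T).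

Lemma best_match_same_lca x y z u u' : sigma y = sigma z ->
  best_match T sigma x y -> best_match T sigma x z ->
  is_lca par (leaf x) (leaf y) u -> is_lca par (leaf x) (leaf z) u' -> u = u'.
Proof.
move=> syz [_ bxy] [_ bxz] lu lu'.
by apply: (anc_antisym par_root anc_root); [apply: bxy lu lu' | apply: bxz lu' lu].
Qed.

Lemma best_match_lower x y w u u' : best_match T sigma x y -> sigma w = sigma y ->
  is_lca par (leaf x) (leaf y) u -> is_lca par (leaf x) (leaf w) u' ->
  anc par u' u -> best_match T sigma x w.
Proof.
move=> [sxy bxy] swy lu lu' a; split; first by rewrite swy.
move=> w' z z' sw' lz lz'; rewrite -(lca_unique par_root anc_root lu' lz).
by apply: anc_trans a (bxy w' u z' _ lu lz'); rewrite sw'.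
Qed.

Definition mixed_lca z :=
  exists x y, sigma x <> sigma y /\ is_lca par (leaf x) (leaf y) z.

(* If no mixed lca lies strictly below the lca z of x and y (colored
   differently), then y is a best match of x: any other leaf y' colored
   like y has its lca with x comparable to z, and not strictly below it. *)
Lemma lowest_mixed_best_match x y z : sigma x <> sigma y ->
  is_lca par (leaf x) (leaf y) z ->
  (forall z', mixed_lca z' -> anc par z' z -> z' = z) -> best_match T sigma x y.
Proof.
move=> sxy lz low; split=> // y' za z' sy la l'.
rewrite -(lca_unique par_root anc_root lz la).
case: (lz) (l') => xz _ _ [xz' _ _].
case: (anc_total xz xz') => // a.
have -> : z' = z by apply: low a; exists x, y'; rewrite sy.
exact: anc_refl.
Qed.

Lemma lowest_mixed_rbm x y z : sigma x <> sigma y ->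
  is_lca par (leaf x) (leaf y) z ->
  (forall z', mixed_lca z' -> anc par z' z -> z' = z) -> rbm T sigma x y.
Proof.
move=> sxy lz low; split; first exact: lowest_mixed_best_match lz low.
by apply: lowest_mixed_best_match (lca_sym lz) low => E; apply: sxy.
Qed.

Lemma rbm_exists x y : sigma x <> sigma y -> exists x' y', rbm T sigma x' y'.
Proof.
move=> sxy; have [z lz] := lca_exists anc_root (leaf x) (leaf y).
have mz : mixed_lca z by exists x, y.
have [z0 [[x' [y' [sxy' lz0]]] low]] := anc_minimal par_root anc_root mz.
by exists x', y'; apply: lowest_mixed_rbm lz0 low.
Qed.

End BestMatch.

Definition laminar (V : finType) (C D : {set V}) : bool :=
  [|| C \subset D, D \subset C | [disjoint C & D]].

Lemma laminar_sym (V : finType) (C D : {set V}) : laminar C D -> laminar D C.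
Proof. by rewrite /laminar disjoint_sym => /or3P[]->; rewrite ?orbT. Qed.

Lemma laminar_set1 (V : finType) x (D : {set V}) : laminar [set x] D.
Proof. by rewrite /laminar sub1set disjoints1; case: (x \in D); rewrite ?orbT. Qed.

Lemma sub_laminar (V : finType) (C K D : {set V}) :
  C \subset K -> K \subset D \/ [disjoint K & D] -> laminar C D.
Proof.
move=> CK [KD|KD]; first by rewrite /laminar (subset_trans CK KD).
by rewrite /laminar (disjointWl CK KD) !orbT.
Qed.

(* A hierarchy H on V (a laminar family of nonempty sets containing V and
   all singletons) is the cluster system of a phylogenetic tree: the
   vertices are the clusters, the parent of a cluster is the smallest
   cluster properly containing it, ancestry is inclusion, and lcas and best
   matches can be read off the clusters. *)
Section Hierarchy.
Variables (V : finType) (H : {set {set V}}).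
Hypothesis H_setT : setT \in H.
Hypothesis H_set1 : forall x, [set x] \in H.
Hypothesis H_set0 : set0 \notin H.
Hypothesis H_laminar : forall C D, C \in H -> D \in H -> laminar C D.

Definition cluster : finType := {C : {set V} | C \in H}.
Definition croot : cluster := exist _ setT H_setT.
Definition cleaf x : cluster := exist _ [set x] (H_set1 x).
Definition cpar (C : cluster) : cluster :=
  if val C == setT then C else [arg min_(D < croot | val C \proper val D) #|val D|].
Definition ctree : ptree V := PTree croot cpar cleaf.

Lemma cluster_nonempty (C : cluster) : exists x, x \in val C.
Proof.
have: val C != set0 by apply: contraNneq H_set0 => <-; exact: valP.
by case/set0Pn => x; exists x.
Qed.

Lemma cparP (C : cluster) : val C != setT ->
  val C \proper val (cpar C) /\
  forall D : cluster, val C \proper val D -> val (cpar C) \subset val D.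
Proof.
move=> nT; rewrite /cpar (negbTE nT).
have C_root : val C \proper val croot by rewrite /= properT.
case: arg_minnP => // P CP Pmin; split=> // D CD.
case/or3P: (H_laminar (valP P) (valP D)) => [//|DP|dis].
  have /eqP -> // : val D == val P by rewrite eqEcard DP Pmin.
have [x xC] := cluster_nonempty C.
have xP := subsetP (proper_sub CP) x xC; have xD := subsetP (proper_sub CD) x xC.
by rewrite (disjointFr dis xP) in xD.
Qed.

Lemma cpar_sub (C : cluster) : val C \subset val (cpar C).
Proof.
have [E|nT] := eqVneq (val C) setT; first by rewrite /cpar E eqxx E.
by case: (cparP nT) => /proper_sub.
Qed.

Lemma canc u v : anc cpar u v <-> val u \subset val v.
Proof.
split; first by case=> k <-; elim: k => [|k IH] //=; apply: subset_trans IH (cpar_sub _).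
have [n] := ubnP (#|V| - #|val u|); elim: n u => // n IH u lt uv.
have [E|NE] := eqVneq (val u) (val v); first by exists 0; apply: val_inj.
have nT : val u != setT by apply: contraNneq NE => E; rewrite eqEsubset uv E subsetT.
have [pp pmin] := cparP nT.
have [k Ek] : anc cpar (cpar u) v.
  apply: IH; last by apply: pmin; rewrite properEneq NE.
  have := proper_card pp; have := subset_leq_card (subsetT (val (cpar u))).
  rewrite cardsT; lia.
by exists k.+1; rewrite iterSr.
Qed.

Lemma cpar_root : cpar croot = croot. Proof. by rewrite /cpar eqxx. Qed.
Lemma canc_root v : anc cpar v croot. Proof. by apply/canc; apply: subsetT. Qed.

(* A cluster that is not a singleton has, for each of its elements x, a
   child cluster containing x: a maximal proper subcluster containing x. *)
Lemma cchild (v : cluster) x : x \in val v -> val v != [set x] ->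
  exists u, [/\ u <> croot, cpar u = v & x \in val u].
Proof.
move=> xv NE.
pose P (u : cluster) := (x \in val u) && (val u \proper val v).
have P0 : P (cleaf x) by rewrite /P /= set11 properEneq eq_sym NE sub1set.
case: (arg_maxnP (fun u : cluster => #|val u|) P0) => u /andP[xu uv] umax.
have nT : val u != setT by apply: contraTneq uv => ->; rewrite properE subsetT andbF.
have [pp pmin] := cparP nT.
exists u; split=> //; first by move=> E; move: nT; rewrite E eqxx.
apply: val_inj; apply/eqP; apply: contraT => NE2.
have Pp : P (cpar u) by rewrite /P properEneq NE2 pmin // (subsetP (proper_sub pp)).
have le : #|val (cpar u)| <= #|val u| := umax _ Pp.
by rewrite leqNgt (proper_card pp) in le.
Qed.

Lemma cleafE (v : cluster) : is_leafv croot cpar v <-> exists x, cleaf x = v.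
Proof.
split=> [lf|[x <-] u ur pu].
  have [x xv] := cluster_nonempty v.
  have [E|NE] := eqVneq (val v) [set x]; first by exists x; apply: val_inj.
  by have [u [ur pu _]] := cchild xv NE; case: (lf u ur pu).
have nT : val u != setT by apply: contra_not_neq ur => E; apply: val_inj.
have [pp _] := cparP nT; rewrite pu /= in pp.
have /eqP E : val u == set0 by rewrite -cards_eq0 -leqn0 -ltnS -(cards1 x) proper_card.
by move: H_set0; rewrite -E (valP u).
Qed.

Lemma ctree_phylo : is_phylo ctree.
Proof.
split=> /=; [exact: cpar_root | exact: canc_root | | exact: cleafE | ].
  by move=> x y /(congr1 val) /= /set1_inj.
move=> v _ nl; have [x xv] := cluster_nonempty v.
have nleaf y : val v != [set y].
  by apply/negP => /eqP E; apply: nl; apply/cleafE; exists y; apply: val_inj.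
have [u1 [u1r pu1 xu1]] := cchild xv (nleaf x).
have nT : val u1 != setT by apply: contra_not_neq u1r => E; apply: val_inj.
have [pp _] := cparP nT; rewrite pu1 in pp.
case/properP: pp => _ [y yv yu1].
have [u2 [u2r pu2 yu2]] := cchild yv (nleaf y).
by exists u1, u2; split=> // E; rewrite E yu2 in yu1.
Qed.

Lemma clcaP x y (z : cluster) : is_lca cpar (cleaf x) (cleaf y) z <->
  [/\ x \in val z, y \in val z &
      forall C, C \in H -> x \in C -> y \in C -> val z \subset C].
Proof.
have ancE w (u : cluster) : anc cpar (cleaf w) u <-> w \in val u.
  by rewrite -sub1set; exact: canc.
split=> [[/ancE xz /ancE yz zmin]|[xz yz zmin]].
  by split=> // C CH xC yC; apply/(canc _ (exist _ C CH)); apply: zmin; apply/ancE.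
split; try exact/ancE.
by move=> w /ancE xw /ancE yw; apply/canc; apply: zmin => //; exact: valP.
Qed.

Lemma clca_exists x y : exists z, is_lca cpar (cleaf x) (cleaf y) z.
Proof. exact: (lca_exists canc_root). Qed.

Lemma cbest_matchP (S : finType) (sigma : V -> S) x y :
  best_match ctree sigma x y <->
  sigma x <> sigma y /\ forall y' C, C \in H -> sigma y' = sigma y ->
     x \in C -> y' \in C -> y \in C.
Proof.
rewrite /best_match /=; split=> -[sxy bm]; split=> // y'.
  move=> C CH sy xC y'C.
  have [z /[dup] lz /clcaP [xz yz _]] := clca_exists x y.
  have [z' /[dup] lz' /clcaP [_ _ zmin']] := clca_exists x y'.
  have /canc zz' := bm y' z z' sy lz lz'.
  exact: (subsetP (zmin' _ CH xC y'C)) (subsetP zz' _ yz).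
move=> z z' sy /clcaP [_ _ zmin] /clcaP [xz' yz' _].
by apply/canc; apply: zmin (valP z') xz' (bm y' _ (valP z') sy xz' yz').
Qed.

End Hierarchy.

Definition three_walk_closed (V : finType) (e : rel V) : Prop :=
  forall x y z w, e x y -> e y z -> e z w -> e x w.

Section TwoColors.
Variables (V S : finType) (sigma : V -> S).
Hypothesis two_cols : ncolors sigma = 2.

Lemma two_colors x y z : sigma x <> sigma y -> sigma z = sigma x \/ sigma z = sigma y.
Proof.
move=> sxy; have sub : [set sigma x; sigma y] \subset [set sigma v | v : V].
  by apply/subsetP => c; rewrite !inE => /orP[]/eqP->; apply: imset_f.
have /eqP E : [set sigma x; sigma y] == [set sigma v | v : V].
  by rewrite eqEcard sub cards2 -/(ncolors sigma) two_cols; case: eqP.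
have : sigma z \in [set sigma x; sigma y] by rewrite E imset_f.
by rewrite !inE => /orP[]/eqP; [left | right].
Qed.

Lemma other_color x y z : sigma x <> sigma y -> sigma z <> sigma x -> sigma z = sigma y.
Proof. by move=> sxy szx; case: (two_colors z sxy). Qed.

Lemma bicolored_pair : exists x y, sigma x <> sigma y.
Proof.
have : 1 < ncolors sigma by rewrite two_cols.
case/card_gt1P => _ [_ [/imsetP[x _ ->] /imsetP[y _ ->] /eqP sxy]].
by exists x, y.
Qed.

Lemma color_cut x u v :
  (sigma u != sigma v) = ((sigma u == sigma x) != (sigma v == sigma x)).
Proof.
have [->|ux] := eqVneq (sigma u) (sigma x).
  by rewrite eq_sym; case: eqP.
have [->|vx] := eqVneq (sigma v) (sigma x); first by rewrite ux.
by apply/negbTE/negPn/eqP; rewrite (other_color (nesym (elimN eqP ux)) (elimN eqP vx)).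
Qed.

End TwoColors.

Definition component (V : finType) (e : rel V) x := [set y | connect e x y].
Definition isolated (V : finType) (e : rel V) x := [forall y, ~~ e x y].

Section Components.
Variables (V : finType) (e : rel V).
Hypothesis e_sym : symmetric e.

Lemma in_component x : x \in component e x.
Proof. by rewrite inE connect0. Qed.

Lemma component_edge x u v : u \in component e x -> e u v -> v \in component e x.
Proof. by rewrite !inE => xu uv; apply: connect_trans xu (connect1 uv). Qed.

Lemma component_eq x y : connect e x y -> component e x = component e y.
Proof.
move=> xy; apply/setP => w; rewrite !inE; apply/idP/idP; last exact: connect_trans.
by apply: connect_trans; rewrite (sym_connect_sym e_sym).
Qed.

Lemma component_disjoint x y :
  ~~ connect e x y -> [disjoint component e x & component e y].
Proof.
move=> nxy; apply/pred0P => w /=; rewrite !inE; apply/negP => /andP[xw yw].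
by case/negP: nxy; apply: connect_trans xw _; rewrite (sym_connect_sym e_sym).
Qed.

Lemma isolated_component x : isolated e x -> component e x = [set x].
Proof.
move=> /forallP iso; apply/setP => y; rewrite !inE.
apply/idP/eqP => [|->]; last exact: connect0.
by case/connectP => -[|a p] //= /andP[xa _]; move: (iso a); rewrite xa.
Qed.

Lemma not_isolated x : ~~ isolated e x -> exists y, e x y.
Proof. by rewrite negb_forall => /existsP [y]; rewrite negbK; exists y. Qed.

End Components.

Definition cut_on (V : finType) (e : rel V) (C A : {set V}) : Prop :=
  {in C &, forall u v, e u v = ((u \in A) != (v \in A))}.

(* Walks of length three inside a set whose edges are those crossing a cut
   are closed: crossing the cut three times amounts to crossing it. *)
Lemma cut_walk_closed (V : finType) (e : rel V) (C A : {set V}) x y z w :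
  cut_on e C A ->
  x \in C -> y \in C -> z \in C -> w \in C -> e x y -> e y z -> e z w -> e x w.
Proof.
move=> cut xC yC zC wC; rewrite !cut //.
by case: (x \in A); case: (y \in A); case: (z \in A); case: (w \in A).
Qed.

Lemma cut_biclique (V : finType) (e : rel V) (C A : {set V}) :
  C :&: A != set0 -> C :\: A != set0 -> cut_on e C A -> is_biclique e C.
Proof.
move=> CA CnA cut; right; exists (C :&: A), (C :\: A); split=> //.
- by apply/setP => w; rewrite !inE; case: (w \in A); case: (w \in C).
- exact: setID.
move=> u v uC vC; rewrite cut // !inE uC vC /=.
by case: (u \in A); case: (v \in A) => /=; intuition.
Qed.

Lemma biclique_cut (V : finType) (e : rel V) (C : {set V}) x y :
  irreflexive e -> is_biclique e C -> x \in C -> y \in C -> e x y ->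
  exists A, cut_on e C A.
Proof.
move=> e_irr [/eqP/cards1P [a ->]|[A [B [AB0 ABC _ _ edgeE]]]] xC yC xy.
  by move: xC yC xy; rewrite !inE => /eqP -> /eqP ->; rewrite e_irr.
have inB w : w \in C -> (w \in B) = (w \notin A).
  have : w \in A :&: B = false by rewrite AB0 inE.
  by rewrite -ABC !inE; case: (w \in A); case: (w \in B).
exists A => u v uC vC; move: (edgeE u v uC vC); rewrite !inB //.
by case: (e u v) (u \in A) (v \in A) => [] [] []; rewrite /= /is_true; intuition congruence.
Qed.

Section ClosedGraph.
Variables (V S : finType) (e : rel V) (sigma : V -> S).
Hypothesis e_sym : symmetric e.
Hypothesis two_cols : ncolors sigma = 2.
Hypothesis proper : properly_colored e sigma.
Hypothesis walk_closed : three_walk_closed e.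

(* Fixing a neighbor
   z0 of x, every vertex y reachable from x is adjacent to x if colored
   differently, and adjacent to z0 otherwise: this invariant is preserved
   along edges by closing the walks x - z0 - a - b and b - a - x - z0. *)
Lemma connect_edge x y : connect e x y -> sigma x <> sigma y -> e x y.
Proof.
move=> xy sxy; have [iso|/not_isolated [z0 xz0]] := boolP (isolated e x).
  have : y \in component e x by rewrite inE.
  by rewrite isolated_component // inE => /eqP yx; case: sxy; rewrite yx.
pose Inv y := (sigma y <> sigma x -> e x y) /\ (sigma y = sigma x -> e y z0).
have Inv_edge a b : Inv a -> e a b -> Inv b.
  move=> [ax az0] ab; have [sax|sax] := eqVneq (sigma a) (sigma x).
    split=> [_|sbx]; last by case: (proper ab); rewrite sax sbx.
    by apply: (walk_closed xz0 _ ab); rewrite e_sym; apply: az0.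
  have sbx : sigma b = sigma x.
    exact: (other_color two_cols (elimN eqP sax) (nesym (proper ab))).
  have ba : e b a by rewrite e_sym.
  have xa : e a x by rewrite e_sym; apply: ax; apply/eqP.
  by split=> [/(_ sbx) []|_]; apply: walk_closed ba xa xz0.
have Inv_path p c : Inv c -> path e c p -> Inv (last c p).
  by elim: p c => [//|a p IH] c Ic /= /andP[ca pa]; apply: IH (Inv_edge _ _ Ic ca) pa.
have Inv_x : Inv x by split=> [/(_ erefl) []|_ //].
case/connectP: xy sxy => p xp -> sxy.
by case: (Inv_path p x Inv_x xp) => h _; apply: h => E; apply: sxy; rewrite E.
Qed.

Lemma component_color_cut x : cut_on e (component e x) [set v | sigma v == sigma x].
Proof.
move=> u v; rewrite !inE => xu xv; rewrite -color_cut //.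
apply/idP/idP => [/proper/eqP //|/eqP]; apply: connect_edge.
by apply: connect_trans xv; rewrite (sym_connect_sym e_sym).
Qed.

Lemma closed_bicluster : bicluster e.
Proof.
move=> x; have [iso|/not_isolated [y xy]] := boolP (isolated e x).
  by left; rewrite -/(component e x) isolated_component // cards1.
change (is_biclique e (component e x)).
apply: (cut_biclique _ _ (component_color_cut (x := x))).
  by apply/set0Pn; exists x; rewrite !inE connect0 eqxx.
apply/set0Pn; exists y; rewrite !inE connect1 // andbT.
by apply/eqP => E; apply: (proper xy); rewrite E.
Qed.

End ClosedGraph.

(* Conversely, in a bicluster graph every walk stays in a biclique, whose
   edges are those crossing a cut. *)
Lemma bicluster_closed (V : finType) (e : rel V) :
  irreflexive e -> bicluster e -> three_walk_closed e.
Proof.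
move=> e_irr bic x y z w xy yz zw.
have xC := in_component e x.
have yC := component_edge xC xy; have zC := component_edge yC yz.
have wC := component_edge zC zw.
have [A cut] := biclique_cut e_irr (bic x) xC yC xy.
exact: cut_walk_closed cut xC yC zC wC xy yz zw.
Qed.

Section RBMG2.
Variables (V S : finType) (e : rel V) (sigma : V -> S).
Hypothesis two_cols : ncolors sigma = 2.

(* Along a walk x - y - z - w of reciprocal best matches, the consecutive
   lcas coincide (they are lcas of two same-colored best matches of y, resp.
   z); their common value u is above x and w, so x and w remain reciprocal
   best matches. *)
Lemma rbmg_three_walk_closed : RBMG e sigma -> three_walk_closed e.
Proof.
case=> proper [T [[par_root anc_root _ _ _] rbmE]] x y z w exy eyz ezw.
have [bxy byx] := (rbmE x y).1 exy.
have [byz bzy] := (rbmE y z).1 eyz.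
have [bzw bwz] := (rbmE z w).1 ezw.
have sxy := proper _ _ exy; have syz := proper _ _ eyz; have szw := proper _ _ ezw.
have szx : sigma z = sigma x.
  by case: (two_colors two_cols z sxy) => // E; case: syz; rewrite E.
have swy : sigma w = sigma y.
  by case: (two_colors two_cols w sxy) => // E; case: szw; rewrite szx E.
have lca := lca_exists anc_root.
have [u lxy] := lca (pt_leaf T x) (pt_leaf T y).
have [u2 lyz] := lca (pt_leaf T y) (pt_leaf T z).
have [u3 lzw] := lca (pt_leaf T z) (pt_leaf T w).
have [v lxw] := lca (pt_leaf T x) (pt_leaf T w).
have E12 : u = u2.
  exact: (best_match_same_lca par_root anc_root (esym szx) byx byz (lca_sym lxy) lyz).
have E23 : u2 = u3.
  exact: (best_match_same_lca par_root anc_root (esym swy) bzy bzw (lca_sym lyz) lzw).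
have vu : anc (pt_par T) v u.
  case: (lxw) (lxy) (lzw) => _ _ vmin [xu _ _] [_ wu _]; apply: vmin xu _.
  by rewrite E12 E23.
apply/rbmE; split; first exact: best_match_lower bxy swy lxy lxw vu.
have lwz : is_lca (pt_par T) (pt_leaf T w) (pt_leaf T z) u.
  by rewrite E12 E23; apply: lca_sym.
exact: best_match_lower bwz (esym szx) lwz (lca_sym lxw) vu.
Qed.

Lemma rbmg_has_edge : RBMG e sigma -> exists x y, e x y.
Proof.
case=> _ [T [[par_root anc_root _ _ _] rbmE]].
have [x [y sxy]] := bicolored_pair two_cols.
by have [x' [y' /rbmE]] := rbm_exists par_root anc_root sxy; exists x', y'.
Qed.

End RBMG2.

(* The converse construction: a properly 2-colored graph with an edge x0 y0
   in which walks of length three are closed is the RBMG (and orthology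
   graph) of the tree of the hierarchy made of V, the singletons, the
   components, their color classes, and the "core": the component of x0
   together with the isolated vertices of the color of x0.  The core
   separates isolated vertices of different colors. *)
Section Construction.
Variables (V S : finType) (e : rel V) (sigma : V -> S).
Hypothesis e_sym : symmetric e.
Hypothesis two_cols : ncolors sigma = 2.
Hypothesis proper : properly_colored e sigma.
Hypothesis walk_closed : three_walk_closed e.
Variables x0 y0 : V.
Hypothesis x0y0 : e x0 y0.

Definition color_class x := [set v | sigma v == sigma x].
Definition core := component e x0 :|: [set z | isolated e z && (sigma z == sigma x0)].

Definition local_cluster x (C : {set V}) :=
  [|| C == [set x], C == component e x | C == component e x :&: color_class x].

Definition clusters : {set {set V}} :=
  [set C | [|| C == setT, C == core | [exists x, local_cluster x C]]].

Lemma local_sub x C : local_cluster x C -> C \subset component e x.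
Proof.
by case/or3P => /eqP->; rewrite ?subxx ?subsetIl // sub1set in_component.
Qed.

Lemma local_mem x C : local_cluster x C -> x \in C.
Proof. by case/or3P => /eqP->; rewrite !inE ?connect0 ?eqxx. Qed.

Lemma clusters_setT : setT \in clusters. Proof. by rewrite inE eqxx. Qed.

Lemma clusters_local x C : local_cluster x C -> C \in clusters.
Proof.
by move=> Cx; rewrite inE; apply/orP; right; apply/orP; right; apply/existsP; exists x.
Qed.

Lemma clusters_set1 x : [set x] \in clusters.
Proof. by apply: (clusters_local (x := x)); rewrite /local_cluster eqxx. Qed.

Lemma clusters_component x : component e x \in clusters.
Proof. by apply: (clusters_local (x := x)); rewrite /local_cluster eqxx orbT. Qed.

Lemma clusters_class x : component e x :&: color_class x \in clusters.
Proof. by apply: (clusters_local (x := x)); rewrite /local_cluster eqxx !orbT. Qed.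

Lemma clusters_core : core \in clusters. Proof. by rewrite inE eqxx orbT. Qed.

Lemma x0_core : x0 \in core. Proof. by rewrite !inE connect0. Qed.

Lemma clusters_set0 : set0 \notin clusters.
Proof.
rewrite inE; apply/or3P => -[/eqP E|/eqP E|/existsP [x /local_mem]]; last by rewrite inE.
  by move: (in_setT x0); rewrite -E inE.
by move: x0_core; rewrite -E inE.
Qed.

Lemma component_core y : component e y \subset core \/ [disjoint component e y & core].
Proof.
have [x0y|nx0y] := boolP (connect e x0 y).
  by left; rewrite -(component_eq e_sym x0y) subsetUl.
have [/andP[iso sy]|niso] := boolP (isolated e y && (sigma y == sigma x0)).
  by left; rewrite isolated_component // sub1set !inE iso sy orbT.
right; apply/pred0P => v /=; rewrite !inE; apply/negP => /andP[yv /orP[x0v|/andP[iso sv]]].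
  by case/negP: nx0y; apply: connect_trans x0v _; rewrite (sym_connect_sym e_sym).
have : y \in component e v by rewrite inE (sym_connect_sym e_sym).
by rewrite isolated_component // inE => /eqP yv'; rewrite yv' iso sv in niso.
Qed.

Lemma local_laminar x y C D : connect e x y ->
  local_cluster x C -> local_cluster y D -> laminar C D.
Proof.
move=> xy Cx Dy; have Dx : D \subset component e x.
  by rewrite (component_eq e_sym xy); apply: local_sub Dy.
move: Cx Dy; rewrite /local_cluster -(component_eq e_sym xy).
case/or3P => /eqP-> Dy; first exact: laminar_set1.
  by apply: laminar_sym; apply: sub_laminar Dx _; left.
case/or3P: Dy => /eqP->; first exact/laminar_sym/laminar_set1.
  by apply: sub_laminar (subsetIl _ _) _; left.
have [sxy|sxy] := eqVneq (sigma x) (sigma y).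
  by rewrite /color_class sxy /laminar subxx.
rewrite /laminar; apply/orP; right; apply/orP; right; apply/pred0P => v /=; rewrite !inE.
by apply/negbTE/negP => /andP[/andP[_ /eqP->] /andP[_]]; rewrite (negbTE sxy).
Qed.

Lemma clusters_laminar C D : C \in clusters -> D \in clusters -> laminar C D.
Proof.
have setT_lam (K : {set V}) : laminar setT K by rewrite /laminar subsetT orbT.
have core_lam K x : local_cluster x K -> laminar K core.
  by move=> Kx; apply: sub_laminar (local_sub Kx) (component_core x).
rewrite !inE => /or3P[/eqP->|/eqP->|/existsP[x Cx]] /or3P[/eqP->|/eqP->|/existsP[y Dy]];
  try exact: setT_lam; try exact: laminar_sym (setT_lam _).
- by rewrite /laminar subxx.
- exact: laminar_sym (core_lam _ _ Dy).
- exact: core_lam Cx.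
have [xy|nxy] := boolP (connect e x y); first exact: local_laminar xy Cx Dy.
apply: sub_laminar (local_sub Cx) _; right.
exact: disjointWr (local_sub Dy) (component_disjoint e_sym nxy).
Qed.

Definition cluster_best_match x y := sigma x <> sigma y /\
  forall y' C, C \in clusters -> sigma y' = sigma y -> x \in C -> y' \in C -> y \in C.

(* Adjacent vertices are best matches: a cluster containing x and a vertex
   colored like y is V, the core, or the component of x. *)
Lemma edge_cluster_best_match x y : e x y -> cluster_best_match x y.
Proof.
move=> xy; split=> [|y' C]; first exact: proper xy.
rewrite inE => /or3P[/eqP->|/eqP->|/existsP[w Cw]] sy xC y'C; first by rewrite inE.
  case/setUP: xC => [/component_edge/(_ xy) yC|]; first by apply/setUP; left.
  by rewrite inE => /andP[/forallP/(_ y)]; rewrite xy.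
case/or3P: Cw => /eqP CE; move: xC y'C; rewrite CE !inE.
- by move=> /eqP xw /eqP y'w; case: (proper xy); rewrite -sy xw y'w.
- by move=> wx _; apply: connect_trans wx (connect1 xy).
- by move=> /andP[_ /eqP sx] /andP[_ /eqP sy']; case: (proper xy); rewrite -sy sx sy'.
Qed.

(* A vertex with a neighbor w is adjacent to its best matches y: w is
   colored like y, so the component of x contains y. *)
Lemma nonisolated_best_match x y :
  ~~ isolated e x -> cluster_best_match x y -> e x y.
Proof.
case/not_isolated => w xw [sxy bm].
have swy : sigma w = sigma y := other_color two_cols sxy (nesym (proper xw)).
apply: (connect_edge e_sym two_cols proper walk_closed _ sxy); rewrite -inE.
apply: (bm w _ (clusters_component x) swy (in_component e x)).
by rewrite inE connect1.
Qed.

(* Two isolated vertices of different colors are not best matches: the core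
   contains x and y0 but not y. *)
Lemma isolated_not_best_match x y : isolated e x -> isolated e y ->
  sigma x = sigma x0 -> ~ cluster_best_match x y.
Proof.
move=> xiso yiso sx [sxy bm].
have sy : sigma y = sigma y0.
  by apply: (other_color two_cols (proper x0y0)); rewrite -sx; apply: nesym.
have xcore : x \in core by rewrite !inE xiso sx eqxx orbT.
have y0core : y0 \in core by rewrite !inE connect1.
case/setUP: (bm y0 _ clusters_core (esym sy) xcore y0core) => [x0y|].
  have : x0 \in component e y by rewrite inE (sym_connect_sym e_sym) -inE.
  rewrite isolated_component // inE => /eqP x0y'.
  by move: yiso; rewrite -x0y' => /forallP/(_ y0); rewrite x0y0.
by rewrite inE => /andP[_ /eqP sy0]; case: sxy; rewrite sx -sy0.
Qed.

Lemma cluster_best_match_edge x y :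
  cluster_best_match x y -> cluster_best_match y x -> e x y.
Proof.
move=> bxy byx; have sxy := bxy.1.
have [xiso|] := boolP (isolated e x); last by move/nonisolated_best_match; apply.
have [yiso|] := boolP (isolated e y); last first.
  by move/nonisolated_best_match/(_ byx); rewrite e_sym.
case: (two_colors two_cols x0 sxy) => [sx0|sy0].
  by case: (isolated_not_best_match xiso yiso (esym sx0) bxy).
by case: (isolated_not_best_match yiso xiso (esym sy0) byx).
Qed.

Definition cluster_tree := ctree clusters_setT clusters_set1.

Lemma cluster_tree_phylo : is_phylo cluster_tree.
Proof. exact: (ctree_phylo clusters_setT clusters_set1 clusters_set0 clusters_laminar). Qed.

Lemma cluster_tree_best_matchP x y :
  best_match cluster_tree sigma x y <-> cluster_best_match x y.
Proof.
exact (cbest_matchP clusters_setT clusters_set1 clusters_set0 clusters_laminar sigma x y).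
Qed.

Lemma construction_rbmg : RBMG e sigma.
Proof.
split=> //; exists cluster_tree; split=> [|x y]; first exact: cluster_tree_phylo.
rewrite /rbm !cluster_tree_best_matchP; split=> [xy|[]]; last exact: cluster_best_match_edge.
by split; apply: edge_cluster_best_match; rewrite // e_sym.
Qed.

Definition edge_component (C : {set V}) : bool :=
  [exists u, (C == component e u) && ~~ isolated e u].

Local Notation clcaE := (clcaP clusters_setT clusters_set1 clusters_set0 clusters_laminar).

Lemma lca_of_edge x y z : e x y ->
  is_lca (pt_par cluster_tree) (pt_leaf cluster_tree x) (pt_leaf cluster_tree y) z ->
  val z = component e x.
Proof.
move=> xy /clcaE [xz yz zmin]; have sxy := proper xy.
apply/eqP; rewrite eqEsubset zmin ?clusters_component ?in_component ?inE ?connect1 //.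
move: (valP z) xz yz; rewrite inE => /or3P[/eqP->|/eqP->|/existsP[w Cw]] xz yz.
- exact: subsetT.
- case/setUP: xz => [|]; first by rewrite inE => /(component_eq e_sym) <-; apply: subsetUl.
  by rewrite inE => /andP[/forallP/(_ y)]; rewrite xy.
case/or3P: Cw => /eqP CE; move: xz yz; rewrite CE !inE.
- by move=> /eqP xw /eqP yw; case: sxy; rewrite xw yw.
- by move=> wx _; rewrite (component_eq e_sym wx) subxx.
- by move=> /andP[_ /eqP sx] /andP[_ /eqP sy]; case: sxy; rewrite sx sy.
Qed.

(* The labeling is correct: adjacent vertices have their component as lca;
   conversely, vertices whose lca is the component of a non-isolated vertex
   u are connected, hence adjacent unless equally colored, in which case
   their lca lies inside a color class and cannot contain an edge of u. *)
Lemma construction_orthology : orthology_graph e.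
Proof.
exists cluster_tree, (fun z => edge_component (val z)); split=> [|x y nxy].
  exact: cluster_tree_phylo.
split=> [xy z /(lca_of_edge xy) ->|label].
  by apply/existsP; exists x; rewrite eqxx; apply/forallPn; exists y; rewrite negbK.
have [z lz] := clca_exists clusters_setT clusters_set1 clusters_set0 clusters_laminar x y.
have /existsP [u /andP[/eqP zu /not_isolated [v uv]]] := label z lz.
case/clcaE: lz => xz yz zmin; rewrite zu !inE in xz yz.
have xy : connect e x y by apply: connect_trans yz; rewrite (sym_connect_sym e_sym).
have [sxy|nsxy] := eqVneq (sigma x) (sigma y); last first.
  exact: (connect_edge e_sym two_cols proper walk_closed xy (elimN eqP nsxy)).
have := zmin _ (clusters_class x); rewrite !inE connect0 xy sxy eqxx zu.
move=> /(_ isT isT) /subsetP sub; have uu := in_component e u.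
have := sub u uu; have := sub v (component_edge uu uv).
by rewrite !inE => /andP[_ /eqP sv] /andP[_ /eqP su]; case: (proper uv); rewrite su sv.
Qed.

End Construction.

Lemma disjoint_colors (V S : finType) (sigma : V -> S) (W1 W2 : {set V}) u v :
  (sigma @: W1) :&: (sigma @: W2) = set0 -> u \in W1 -> v \in W2 -> sigma u <> sigma v.
Proof.
move=> cdis uW vW suv.
have : sigma u \in (sigma @: W1) :&: (sigma @: W2) by rewrite inE imset_f // suv imset_f.
by rewrite cdis inE.
Qed.

Section HcCograph.
Variables (V S : finType) (e : rel V) (sigma : V -> S).
Hypothesis e_sym : symmetric e.
Hypothesis e_irr : irreflexive e.
Hypothesis two_cols : ncolors sigma = 2.

Lemma hc_nonempty W : hc e sigma W -> exists x, x \in W.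
Proof.
by elim=> [x|W1 W2 _ [x xW] *|W1 W2 _ [x xW] *]; exists x; rewrite ?inE ?xW.
Qed.

Lemma hc_proper W : hc e sigma W -> {in W &, forall x y, e x y -> sigma x <> sigma y}.
Proof.
elim=> [x|W1 W2 _ P1 _ P2 _ cdis _|W1 W2 _ P1 _ P2 _ _ ncross] u v.
- by rewrite !inE => /eqP-> /eqP->; rewrite e_irr.
- rewrite !inE => /orP[]uW /orP[]vW uv; [exact: P1 | | | exact: P2].
    exact: disjoint_colors cdis uW vW.
  by apply: nesym; apply: disjoint_colors cdis vW uW.
rewrite !inE => /orP[]uW /orP[]vW uv; [exact: P1 | | | exact: P2].
  by move: (ncross _ _ uW vW); rewrite uv.
by move: (ncross _ _ vW uW); rewrite e_sym uv.
Qed.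

Lemma join_part_mono (W1 W2 : {set V}) x2 u v :
  (sigma @: W1) :&: (sigma @: W2) = set0 -> x2 \in W2 ->
  u \in W1 -> v \in W1 -> sigma u = sigma v.
Proof.
move=> cdis x2W uW vW; have ux2 := disjoint_colors cdis uW x2W.
by case: (two_colors two_cols v ux2) => [->|vx2] //; case: (disjoint_colors cdis vW x2W).
Qed.

Lemma hc_join_cut W1 W2 : hc e sigma W1 -> hc e sigma W2 -> W1 :&: W2 = set0 ->
  (sigma @: W1) :&: (sigma @: W2) = set0 ->
  (forall x y, x \in W1 -> y \in W2 -> e x y) -> cut_on e (W1 :|: W2) W1.
Proof.
move=> hc1 hc2 dis cdis cross.
have [x1 x1W] := hc_nonempty hc1; have [x2 x2W] := hc_nonempty hc2.
have cdis' : (sigma @: W2) :&: (sigma @: W1) = set0 by rewrite setIC.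
have notW1 v : v \in W2 -> v \notin W1.
  by move=> vW; apply/negP => vW1; move: (in_set0 v); rewrite -dis inE vW1 vW.
have inside (W W' : {set V}) x' : hc e sigma W -> (sigma @: W) :&: (sigma @: W') = set0 ->
    x' \in W' -> {in W &, forall u v, e u v = false}.
  move=> hcW cd x'W u v uW vW; apply/negbTE/negP => uv.
  exact: (hc_proper hcW uW vW uv (join_part_mono cd x'W uW vW)).
move=> u v; rewrite !inE => /orP[]uW /orP[]vW.
- by rewrite (inside _ _ _ hc1 cdis x2W) ?uW ?vW.
- by rewrite cross // uW (negbTE (notW1 _ vW)).
- by rewrite e_sym cross // vW (negbTE (notW1 _ uW)).
- by rewrite (inside _ _ _ hc2 cdis' x1W) ?(negbTE (notW1 _ uW)) ?(negbTE (notW1 _ vW)).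
Qed.

(* Walks of length three inside an hc-cograph are closed: in a join the
   edges form a cut, and in a disjoint union a walk stays in one part. *)
Lemma hc_closed W : hc e sigma W -> forall x y z w,
  x \in W -> y \in W -> z \in W -> w \in W -> e x y -> e y z -> e z w -> e x w.
Proof.
elim=> [a|W1 W2 hc1 _ hc2 _ dis cdis cross|W1 W2 _ C1 _ C2 _ _ ncross] x y z w.
- by rewrite !inE => /eqP-> /eqP->; rewrite e_irr.
- exact: cut_walk_closed (hc_join_cut hc1 hc2 dis cdis cross).
have stay1 a b : a \in W1 -> b \in W1 :|: W2 -> e a b -> b \in W1.
  move=> aW; rewrite inE => /orP[//|bW] ab.
  by move: (ncross _ _ aW bW); rewrite ab.
have stay2 a b : a \in W2 -> b \in W1 :|: W2 -> e a b -> b \in W2.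
  move=> aW; rewrite inE => /orP[bW|//] ab.
  by move: (ncross _ _ bW aW); rewrite e_sym ab.
move=> xW yW zW wW xy yz zw; case/setUP: (xW) => xW'.
  have yW' := stay1 _ _ xW' yW xy; have zW' := stay1 _ _ yW' zW yz.
  exact: C1 xW' yW' zW' (stay1 _ _ zW' wW zw) xy yz zw.
have yW' := stay2 _ _ xW' yW xy; have zW' := stay2 _ _ yW' zW yz.
exact: C2 xW' yW' zW' (stay2 _ _ zW' wW zw) xy yz zw.
Qed.

(* An hc-cograph using both colors has an edge: in a join, between its
   parts; in a disjoint union, in the part carrying all its colors. *)
Lemma hc_edge W : hc e sigma W -> 1 < #|sigma @: W| ->
  exists x y, [/\ x \in W, y \in W & e x y].
Proof.
elim=> [a|W1 W2 hc1 _ hc2 _ _ _ cross|W1 W2 _ E1 _ E2 _ nest _].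
- by rewrite imset_set1 cards1.
- have [x1 x1W] := hc_nonempty hc1; have [x2 x2W] := hc_nonempty hc2.
  by exists x1, x2; rewrite !inE x1W x2W orbT; split=> //; apply: cross.
rewrite imsetU; case: nest => [/setIidPl/setUidPr ->|].
  by case/E2 => x [y [xW yW xy]]; exists x, y; rewrite !inE xW yW !orbT.
rewrite setIC => /setIidPl/setUidPl -> /E1 [x [y [xW yW xy]]].
by exists x, y; rewrite !inE xW yW.
Qed.

End HcCograph.

(* Conversely, a properly 2-colored graph with an edge x0 y0 in which walks
   of length three are closed is an hc-cograph: monochromatic sets are
   disjoint unions of vertices, a component is the join of its two color
   classes, and the graph is the disjoint union of its components, added to
   the component of x0 (which carries both colors) one at a time. *)
Section HcConstruction.
Variables (V S : finType) (e : rel V) (sigma : V -> S).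
Hypothesis e_sym : symmetric e.
Hypothesis two_cols : ncolors sigma = 2.
Hypothesis proper : properly_colored e sigma.
Hypothesis walk_closed : three_walk_closed e.
Variables x0 y0 : V.
Hypothesis x0y0 : e x0 y0.

Lemma monochromatic_hc W : W != set0 -> {in W &, forall u v, sigma u = sigma v} ->
  hc e sigma W.
Proof.
have [n] := ubnP #|W|; elim: n W => // n IH W ltW /set0Pn [x xW] mono.
have [Wx0|Wx] := eqVneq (W :\ x) set0.
  by rewrite -(setD1K xW) Wx0 setU0; apply: hc_K1.
rewrite -(setD1K xW); apply: hc_union.
- exact: hc_K1.
- apply: IH Wx _; first by rewrite (cardsD1 x W) xW in ltW.
  by move=> u v /setD1P[_ uW] /setD1P[_ vW]; apply: mono.
- by apply/setP => y; rewrite !inE; case: eqP.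
- left; apply/setIidPl; rewrite imset_set1 sub1set.
  case/set0Pn: Wx => y /[dup] yWx /setD1P[_ yW].
  by rewrite (mono _ _ xW yW) imset_f.
- move=> a b; rewrite !inE => /eqP-> /andP[_ bW]; apply/negP => xb.
  exact: proper xb (mono _ _ xW bW).
Qed.

Lemma component_hc z : hc e sigma (component e z).
Proof.
have [iso|/not_isolated [w zw]] := boolP (isolated e z).
  by rewrite isolated_component //; apply: hc_K1.
pose A := [set v | sigma v == sigma z].
have swz : sigma w <> sigma z by apply: nesym; apply: proper zw.
rewrite -(setID (component e z) A); apply: hc_join.
- apply: monochromatic_hc; first by apply/set0Pn; exists z; rewrite !inE connect0 eqxx.
  by move=> u v; rewrite !inE => /andP[_ /eqP->] /andP[_ /eqP->].
- apply: monochromatic_hc.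
    by apply/set0Pn; exists w; rewrite !inE connect1 // andbT; apply/eqP.
  move=> u v; rewrite !inE => /andP[/eqP uz _] /andP[/eqP vz _].
  by rewrite (other_color two_cols (nesym swz) uz) (other_color two_cols (nesym swz) vz).
- by apply/setP => v; rewrite !inE; case: (sigma v == sigma z); rewrite ?andbF.
- apply/setP => c; rewrite !inE; apply/negbTE/negP => /andP[/imsetP[u uA ->] /imsetP[v vB E]].
  move: uA vB; rewrite !inE => /andP[_ /eqP su] /andP[/eqP sv _].
  by apply: sv; rewrite -E su.
move=> u v; rewrite !inE => /andP[zu /eqP su] /andP[/eqP sv zv].
apply: (connect_edge e_sym two_cols proper walk_closed); last by rewrite su; apply: nesym.
by apply: connect_trans zv; rewrite (sym_connect_sym e_sym).
Qed.

Lemma closed_set_component (W : {set V}) z :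
  (forall u v, u \in W -> e u v -> v \in W) -> z \in W -> component e z \subset W.
Proof.
move=> Wclosed zW; apply/subsetP => v; rewrite inE => /connectP [p zp ->].
by elim: p z zW zp => [//|a p IH] z zW /= /andP[za ap]; apply: IH (Wclosed _ _ zW za) ap.
Qed.

Lemma component_union_hc (W : {set V}) :
  (forall u v, u \in W -> e u v -> v \in W) -> component e x0 \subset W -> hc e sigma W.
Proof.
have [n] := ubnP #|W|; elim: n W => // n IH W ltW Wclosed x0W.
have [->|] := eqVneq W (component e x0); first exact: component_hc.
rewrite eqEsubset x0W andbT => /subsetPn [z zW zx0].
have zW' := closed_set_component Wclosed zW.
have x0z : [disjoint component e x0 & component e z].
  by apply: component_disjoint => //; rewrite inE in zx0.
have x0W' : component e x0 \subset W :\: component e z.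
  by rewrite subsetD x0W x0z.
rewrite -(setID W (component e z)) (setIidPr zW') setUC; apply: hc_union.
- apply: IH x0W'.
    have : W :\: component e z \proper W.
      by apply/properP; split; [apply: subsetDl | exists z; rewrite // !inE connect0].
    move/proper_card; lia.
  move=> u v; rewrite !inE => /andP[zu uW] uv; rewrite (Wclosed _ _ uW uv) andbT.
  by apply: contra zu => zv; apply: connect_trans zv (connect1 _); rewrite e_sym.
- exact: component_hc.
- by apply/setP => v; rewrite !inE; case: (connect e z v); rewrite ?andbF.
- right; apply/setIidPr/subsetP => c /imsetP[u _ ->].
  have sx0y0 := proper x0y0.
  have col v : v \in component e x0 -> sigma v \in sigma @: (W :\: component e z).
    by move=> vx0; apply: imset_f; apply: (subsetP x0W').
  case: (two_colors two_cols u sx0y0) => ->; apply: col; rewrite !inE ?connect0 ?connect1 //.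
- move=> u v; rewrite !inE => /andP[zu _] zv; apply: contra zu => uv.
  by apply: connect_trans zv (connect1 _); rewrite e_sym.
Qed.

End HcConstruction.

Definition closed_bipartite (V S : finType) (e : rel V) (sigma : V -> S) : Prop :=
  [/\ properly_colored e sigma, three_walk_closed e & exists x y, e x y].

Section Characterizations.
Variables (V S : finType) (e : rel V) (sigma : V -> S).
Hypothesis e_sym : symmetric e.
Hypothesis e_irr : irreflexive e.
Hypothesis two_cols : ncolors sigma = 2.

Lemma rbmg2E : nRBMG 2 e sigma <-> closed_bipartite e sigma.
Proof.
split=> [[rbmg _]|[proper walk_closed [x0 [y0 x0y0]]]].
  split; [by case: rbmg | exact: rbmg_three_walk_closed rbmg | exact: rbmg_has_edge rbmg].
by split=> //; apply: (construction_rbmg e_sym two_cols proper walk_closed x0y0).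
Qed.

Lemma bicluster2E :
  [/\ properly_colored e sigma, bicluster e & exists x y, e x y] <-> closed_bipartite e sigma.
Proof.
split=> -[proper H edge]; split=> //; last exact: (closed_bicluster e_sym two_cols proper H).
exact: bicluster_closed e_irr H.
Qed.

Lemma hc_cograph2E : n_hc_cograph 2 e sigma <-> closed_bipartite e sigma.
Proof.
split=> [[hcT _]|[proper walk_closed [x0 [y0 x0y0]]]]; last first.
  split=> //; apply: (component_union_hc e_sym two_cols proper walk_closed x0y0).
    by move=> u v; rewrite !inE.
  exact: subsetT.
split.
- by move=> x y; apply: (hc_proper e_sym e_irr hcT); rewrite inE.
- by move=> x y z w; apply: (hc_closed e_sym e_irr two_cols hcT); rewrite inE.
have [|x [y [_ _ xy]]] := hc_edge hcT; last by exists x, y.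
have -> : sigma @: setT = [set sigma v | v : V].
  by apply/setP => c; apply/imsetP/imsetP => -[v _ ->]; exists v.
by rewrite -/(ncolors sigma) two_cols.
Qed.

Lemma orthology_of_closed_bipartite : closed_bipartite e sigma -> orthology_graph e.
Proof.
case=> proper walk_closed [x0 _].
exact: (construction_orthology e_sym two_cols proper walk_closed x0).
Qed.

End Characterizations.

Theorem mainTheorem2 (V S : finType) (e : rel V) (sigma : V -> S) :
  symmetric e -> irreflexive e ->
  (forall s : S, exists x : V, sigma x = s) ->
  ncolors sigma = 2 ->
  [/\ nRBMG 2 e sigma <->
        [/\ properly_colored e sigma, bicluster e & exists x y, e x y],
      nRBMG 2 e sigma <-> nRBMG 2 e sigma /\ orthology_graph e &
      nRBMG 2 e sigma <-> n_hc_cograph 2 e sigma].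
Proof.
move=> e_sym e_irr _ two_cols; have rbmg2 := rbmg2E e_sym two_cols.
split.
- exact: iff_trans rbmg2 (iff_sym (bicluster2E e_sym e_irr two_cols)).
- split=> [R|[]//]; split=> //.
  exact: orthology_of_closed_bipartite e_sym two_cols (rbmg2.1 R).
- exact: iff_trans rbmg2 (iff_sym (hc_cograph2E e_sym e_irr two_cols)).
Qed.
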